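(* Let $\ell>0$, let $F$ be a smooth closed front wheel trajectory of length $T$ parametrized by arc length, and suppose there is a closed rear wheel trajectory $R(t)$, $t\in[0,T]$, of the bicycle of length $\ell$ (so the bicycle monodromy $M_F$ has a fixed point, and $M_F$ is hyperbolic or parabolic). Let $L=\int_0^T\cos\alpha(t)\,dt$ be the signed length of $R$, where $\alpha(t)=\arg F'(t)-\arg\overrightarrow{R(t)F(t)}$ is the steering angle. Then the derivatives of $M_F$ at its two fixed points are $e^{L/\ell}$ and $e^{-L/\ell}$.
   Context: Bicycle model: a segment $RF$ of fixed length $\ell$ moves in the plane ($F$ = front wheel, $R$ = rear wheel) subject to the constraint that the velocity of $R$ is always parallel to $RF$. Given the front path and an initial position of $R$ on the circle of radius $\ell$ about the initial front point, the rear path is determined. For a closed front path, the bicycle monodromy $M_F$ is the self-map of the circle of radius $\ell$ (parametrized by angle) sending the initial position of $R$ relative to $F$ to its terminal position; it is a Möbius transformation, called hyperbolic if it has two fixed points, parabolic if it has exactly one (a double fixed point), elliptic if none. The signed length of the rear track is its net roll: the alternating sum of lengths of its smooth pieces, with sign changing at each cusp; equivalently $\int_0^T\cos\alpha\,dt$, since $R'=\cos\alpha\,\overrightarrow{RF}/\ell$. *)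

From Stdlib Require Import Reals.
From Coquelicot Require Import Coquelicot.
Open Scope R_scope.

Definition smooth (f : R -> R) : Prop := forall (n : nat) (x : R), ex_derive_n f n x.

Definition closed_arclength_front (Fx Fy : R -> R) (T : R) : Prop :=
  0 < T /\ smooth Fx /\ smooth Fy /\
  (forall t, Fx (t + T) = Fx t /\ Fy (t + T) = Fy t) /\
  (forall t, (Derive Fx t) ^ 2 + (Derive Fy t) ^ 2 = 1).

Definition rear_track (l : R) (Fx Fy Rx Ry : R -> R) (T : R) : Prop :=
  forall t, 0 <= t <= T ->
    ex_derive Rx t /\ ex_derive Ry t /\
    (Fx t - Rx t) ^ 2 + (Fy t - Ry t) ^ 2 = l ^ 2 /\
    Derive Rx t * (Fy t - Ry t) - Derive Ry t * (Fx t - Rx t) = 0.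

Definition rel_angle (l : R) (Fx Fy Rx Ry : R -> R) (t a : R) : Prop :=
  Fx t - Rx t = l * cos a /\ Fy t - Ry t = l * sin a.

(* M : R -> R is (a continuous lift to angles of) the bicycle monodromy M_F:
   every rear track starting at relative angle a ends at relative angle M a. *)
Definition is_monodromy (l : R) (Fx Fy : R -> R) (T : R) (M : R -> R) : Prop :=
  (forall a, continuous M a) /\
  forall (Rx Ry : R -> R) (a : R),
    rear_track l Fx Fy Rx Ry T -> rel_angle l Fx Fy Rx Ry 0 a ->
    rel_angle l Fx Fy Rx Ry T (M a).

Definition circle_fixed (M : R -> R) (a : R) : Prop :=
  exists k : Z, M a = a + 2 * IZR k * PI.

(* cos of the steering angle alpha = arg F' - arg RF; since |F'| = 1 and
   |RF| = l this is the normalized dot product F'.(F - R) / l. *)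
Definition cos_steer (l : R) (Fx Fy Rx Ry : R -> R) (t : R) : R :=
  (Derive Fx t * (Fx t - Rx t) + Derive Fy t * (Fy t - Ry t)) / l.

Definition signed_length (l : R) (Fx Fy Rx Ry : R -> R) (T : R) : R :=
  RInt (cos_steer l Fx Fy Rx Ry) 0 T.

(* Let u = (F - R) / l along the closed rear track R.  For a constant Y, every solution of the
   linear equation X' = (cos a / l) X + (sin a / l) Y gives another rear track, obtained by turning
   u through twice the argument of X + iY: this linearises the Riccati equation of the rear wheel.
   Variation of constants gives X(T) = e (X(0) + K Y) with e = exp (L / l), so in the angle
   coordinate the monodromy is x |-> a0 + 2 arg (e (cos h + K sin h) + i sin h), h = (x - a0) / 2,
   whose derivative is e / N(x) with N = e^2 (cos h + K sin h)^2 + sin^2 h.  At a0, N = e^2; at any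
   other fixed point the two rotations of (cos a0, sin a0) coincide, which forces N = 1. *)

From Stdlib Require Import Reals Lra.
From Coquelicot Require Import Coquelicot.
Open Scope R_scope.

Ltac fold_eta_Derive :=
  repeat match goal with |- context [Derive (fun x => ?f x) ?t] =>
    change (Derive (fun x => f x) t) with (Derive f t) end.

Lemma cos_sin_add_2kPI (y : R) (k : Z) :
  cos (y + 2 * IZR k * PI) = cos y /\ sin (y + 2 * IZR k * PI) = sin y.
Proof.
  assert (hs : sin (IZR k * PI) = 0) by (apply sin_eq_0_1; eauto).
  replace (2 * IZR k * PI) with (2 * (IZR k * PI)) by ring.
  rewrite cos_plus, sin_plus, sin_2a, cos_2a_sin, hs.
  split; ring.
Qed.

Lemma cos_sin_eq_2kPI (x y : R) :
  cos x = cos y -> sin x = sin y -> exists k : Z, x = y + 2 * IZR k * PI.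
Proof.
  intros hc hs.
  assert (hd : cos (2 * ((x - y) / 2)) = 1).
  { replace (2 * ((x - y) / 2)) with (x - y) by field.
    rewrite cos_minus, hc, hs. pose proof (sin2_cos2 y). unfold Rsqr in *. lra. }
  rewrite cos_2a_sin in hd.
  assert (hh : sin ((x - y) / 2) = 0) by nra.
  destruct (sin_eq_0_0 _ hh) as [k hk]. exists k. lra.
Qed.

Lemma circle_fixed_cos_sin (M : R -> R) (b : R) :
  circle_fixed M b <-> cos (M b) = cos b /\ sin (M b) = sin b.
Proof.
  split.
  - intros [k ->]. apply cos_sin_add_2kPI.
  - intros [hc hs]. exact (cos_sin_eq_2kPI _ _ hc hs).
Qed.

(* Near [a], [M x - M a] is [asin] of [sin (M x - M a)], a differentiable expression in [C], [S]. *)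
Lemma is_derive_angle_lift (M C S : R -> R) (a dC dS : R) :
  continuous M a -> (forall x, cos (M x) = C x) -> (forall x, sin (M x) = S x) ->
  is_derive C a dC -> is_derive S a dS -> is_derive M a (C a * dS - S a * dC).
Proof.
  intros hM hc hs hdC hdS.
  set (g := fun x => S x * C a - C x * S a).
  assert (hg : is_derive g a (dS * C a - dC * S a)).
  { unfold g. auto_derive.
    - repeat split; eexists; eassumption.
    - fold_eta_Derive.
      rewrite (is_derive_unique _ _ _ hdC), (is_derive_unique _ _ _ hdS).
      ring. }
  assert (hasin : is_derive asin (g a) 1).
  { replace (g a) with 0 by (unfold g; ring).
    apply is_derive_Reals.
    assert (h01 : -1 < 0 < 1) by lra.
    apply (derive_pt_eq_1 _ _ _ (derivable_pt_asin 0 h01)).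
    rewrite derive_pt_asin, Rsqr_0, Rminus_0_r, sqrt_1. field. }
  assert (hnear : locally a (fun x => Rabs (M x - M a) < 1)).
  { apply (filterlim_locally M) with (eps := mkposreal 1 Rlt_0_1) in hM. exact hM. }
  apply (is_derive_ext_loc (fun x => M a + asin (g x))).
  - eapply filter_imp; [|exact hnear]. intros x hx. simpl.
    assert (hgx : g x = sin (M x - M a)).
    { unfold g. rewrite sin_minus, <- !hc, <- !hs. ring. }
    rewrite hgx, asin_sin; [ring|].
    pose proof PI2_1. apply Rabs_def2 in hx. lra.
  - pose proof (is_derive_plus _ _ a 0 _ (is_derive_const (M a) a)
                  (is_derive_comp asin g a 1 _ hasin hg)) as hp.
    unfold plus, scal in hp; simpl in hp; unfold mult in hp; simpl in hp.
    replace (C a * dS - S a * dC) with (0 + (dS * C a - dC * S a) * 1) by ring.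
    exact hp.
Qed.

Lemma is_derive_vanishing_on_interval (f : R -> R) (a b t d : R) :
  a < b -> a <= t <= b -> is_derive f t d ->
  (forall s, a <= s <= b -> f s = 0) -> d = 0.
Proof.
  intros hab ht hd hf. apply is_derive_Reals in hd.
  destruct (Req_dec d 0) as [|hne]; [assumption|exfalso].
  assert (he : 0 < Rabs d / 2) by (pose proof (Rabs_pos_lt d hne); lra).
  destruct (hd _ he) as [del hdel]. pose proof (cond_pos del) as hdel_pos.
  assert (hstep : exists h, h <> 0 /\ Rabs h < del /\ a <= t + h <= b).
  { set (m := Rmin (del / 2) ((b - a) / 2)).
    assert (hm : 0 < m /\ m <= del / 2 /\ m <= (b - a) / 2).
    { unfold m; split; [apply Rmin_glb_lt; lra|split; [apply Rmin_l|apply Rmin_r]]. }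
    destruct (Rlt_or_le t ((a + b) / 2)).
    - exists m. rewrite Rabs_pos_eq by lra. repeat split; lra.
    - exists (- m). rewrite Rabs_Ropp, Rabs_pos_eq by lra. repeat split; lra. }
  destruct hstep as [h [hh0 [hhdel hth]]].
  specialize (hdel h hh0 hhdel).
  rewrite (hf _ hth), (hf _ ht) in hdel.
  replace ((0 - 0) / h - d) with (- d) in hdel by (field; assumption).
  rewrite Rabs_Ropp in hdel. lra.
Qed.

Definition clamp (a b t : R) : R := Rmax a (Rmin b t).

Lemma clamp_in (a b t : R) : a <= b -> a <= clamp a b t <= b.
Proof. intro. unfold clamp, Rmax, Rmin. repeat destruct Rle_dec; lra. Qed.

Lemma clamp_id (a b t : R) : a <= t <= b -> clamp a b t = t.
Proof. intro. unfold clamp, Rmax, Rmin. repeat destruct Rle_dec; lra. Qed.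

Lemma clamp_lipschitz (a b x y : R) : Rabs (clamp a b x - clamp a b y) <= Rabs (x - y).
Proof.
  unfold clamp, Rmax, Rmin. repeat destruct Rle_dec;
    unfold Rabs; repeat destruct Rcase_abs; lra.
Qed.

Lemma continuous_clamp_comp (f : R -> R) (a b t : R) : a <= b ->
  (forall s, a <= s <= b -> continuous f s) -> continuous (fun t => f (clamp a b t)) t.
Proof.
  intros hab hf. apply (continuous_comp (clamp a b) f); [|apply hf, clamp_in, hab].
  apply continuity_pt_filterlim. intros eps heps. exists eps. split; [exact heps|].
  intros x [_ hx]. simpl in *. unfold R_dist in *.
  eapply Rle_lt_trans; [apply clamp_lipschitz|exact hx].
Qed.

Lemma is_derive_RInt_continuous (f : R -> R) (a t : R) :
  (forall x, continuous f x) -> is_derive (fun u => RInt f a u) t (f t).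
Proof.
  intro hc. apply is_derive_RInt with (a := a); [|apply hc].
  exists (mkposreal 1 Rlt_0_1). intros y _.
  apply RInt_correct, ex_RInt_continuous. intros; apply hc.
Qed.

(* [(rot_sq_x, rot_sq_y)] is [p + i q] multiplied by [(X + i Y)^2 / |X + i Y|^2], i.e. turned
   through twice the argument of [X + i Y]. *)
Definition rot_sq_x (X Y p q : R) : R := ((X^2 - Y^2) * p - 2 * X * Y * q) / (X^2 + Y^2).
Definition rot_sq_y (X Y p q : R) : R := ((X^2 - Y^2) * q + 2 * X * Y * p) / (X^2 + Y^2).

Lemma rot_sq_norm (X Y p q : R) : X^2 + Y^2 <> 0 ->
  rot_sq_x X Y p q ^ 2 + rot_sq_y X Y p q ^ 2 = p^2 + q^2.
Proof. intro hN. unfold rot_sq_x, rot_sq_y. field. exact hN. Qed.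

Lemma rot_sq_cos_sin (a h : R) :
  rot_sq_x (cos h) (sin h) (cos a) (sin a) = cos (a + 2 * h) /\
  rot_sq_y (cos h) (sin h) (cos a) (sin a) = sin (a + 2 * h).
Proof.
  pose proof (sin2_cos2 h) as h1. unfold Rsqr in h1.
  unfold rot_sq_x, rot_sq_y.
  replace (cos h ^ 2 + sin h ^ 2) with 1 by lra.
  rewrite cos_plus, sin_plus, cos_2a, sin_2a. split; field.
Qed.

Lemma rot_sq_eq_norm (X c s p q : R) :
  c^2 + s^2 = 1 -> s <> 0 -> p^2 + q^2 = 1 ->
  rot_sq_x X s p q = rot_sq_x c s p q -> rot_sq_y X s p q = rot_sq_y c s p q ->
  X^2 + s^2 = 1.
Proof.
  intros hcs hs hpq hx hy.
  set (N := X^2 + s^2).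
  assert (hN : 0 < N) by (pose proof (pow2_gt_0 s hs); pose proof (pow2_ge_0 X); unfold N; lra).
  unfold rot_sq_x, rot_sq_y in hx, hy. fold N in hx, hy. rewrite hcs in hx, hy.
  set (P := c^2 - s^2) in *. set (Q := 2 * c * s) in *.
  assert (e1 : (X^2 - s^2) * p - 2 * X * s * q = N * (P * p - Q * q)).
  { replace ((X^2 - s^2) * p - 2 * X * s * q)
      with (N * (((X^2 - s^2) * p - 2 * X * s * q) / N)) by (field; lra).
    rewrite hx. field. }
  assert (e2 : (X^2 - s^2) * q + 2 * X * s * p = N * (P * q + Q * p)).
  { replace ((X^2 - s^2) * q + 2 * X * s * p)
      with (N * (((X^2 - s^2) * q + 2 * X * s * p) / N)) by (field; lra).
    rewrite hy. field. }
  (* The system [e1, e2] has matrix [[p, -q], [q, p]], of determinant [p^2 + q^2 = 1]. *)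
  assert (hA : X^2 - s^2 = N * P).
  { transitivity (p * ((X^2 - s^2) * p - 2 * X * s * q) + q * ((X^2 - s^2) * q + 2 * X * s * p)).
    - transitivity ((X^2 - s^2) * (p^2 + q^2)); [rewrite hpq|]; ring.
    - rewrite e1, e2. transitivity (N * P * (p^2 + q^2)); [ring|rewrite hpq; ring]. }
  assert (hB : 2 * X * s = N * Q).
  { transitivity (p * ((X^2 - s^2) * q + 2 * X * s * p) - q * ((X^2 - s^2) * p - 2 * X * s * q)).
    - transitivity (2 * X * s * (p^2 + q^2)); [rewrite hpq|]; ring.
    - rewrite e1, e2. transitivity (N * Q * (p^2 + q^2)); [ring|rewrite hpq; ring]. }
  assert (hX : X = N * c).
  { apply Rmult_eq_reg_l with (2 * s); [|lra]. unfold Q in hB. lra. }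
  assert (hfac : (N - 1) * (N * c^2 + s^2) = 0).
  { unfold P in hA. rewrite hX in hA. nra. }
  assert (hpos : 0 < N * c^2 + s^2)
    by (pose proof (pow2_gt_0 s hs); pose proof (pow2_ge_0 c); nra).
  destruct (Rmult_integral _ _ hfac); lra.
Qed.

Lemma is_derive_angle_rot_sq (M X Y : R -> R) (p q a dX dY : R) :
  p^2 + q^2 = 1 -> continuous M a -> X a ^ 2 + Y a ^ 2 <> 0 ->
  (forall x, cos (M x) = rot_sq_x (X x) (Y x) p q) ->
  (forall x, sin (M x) = rot_sq_y (X x) (Y x) p q) ->
  is_derive X a dX -> is_derive Y a dY ->
  is_derive M a (2 * (X a * dY - Y a * dX) / (X a ^ 2 + Y a ^ 2)).
Proof.
  intros hpq hM hN hc hs hX hY.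
  evar (dC : R). assert (hC : is_derive (fun x => rot_sq_x (X x) (Y x) p q) a dC).
  { unfold rot_sq_x. auto_derive; [repeat split; try (eexists; eassumption); exact hN|].
    unfold dC. reflexivity. }
  evar (dS : R). assert (hS : is_derive (fun x => rot_sq_y (X x) (Y x) p q) a dS).
  { unfold rot_sq_y. auto_derive; [repeat split; try (eexists; eassumption); exact hN|].
    unfold dS. reflexivity. }
  pose proof (is_derive_angle_lift M (fun x => rot_sq_x (X x) (Y x) p q)
    (fun x => rot_sq_y (X x) (Y x) p q) a dC dS hM hc hs hC hS) as hMd.
  replace (2 * (X a * dY - Y a * dX) / (X a ^ 2 + Y a ^ 2))
    with (rot_sq_x (X a) (Y a) p q * dS - rot_sq_y (X a) (Y a) p q * dC); [exact hMd|].
  unfold dC, dS, rot_sq_x, rot_sq_y.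
  fold_eta_Derive.
  rewrite (is_derive_unique _ _ _ hX), (is_derive_unique _ _ _ hY).
  transitivity (2 * (X a * dY - Y a * dX) / (X a ^ 2 + Y a ^ 2) * (p^2 + q^2));
    [|rewrite hpq; ring].
  field. intro h0. apply hN. lra.
Qed.

Lemma sum_sq_pos_of_cos_sin (E I h : R) :
  0 < E -> 0 < (E * (cos h + sin h * I)) ^ 2 + sin h ^ 2.
Proof.
  intro hE. destruct (Req_dec (sin h) 0) as [hs|hs].
  - rewrite hs. pose proof (cos_sin_0_var h) as [hc|]; [|contradiction].
    replace (E * (cos h + 0 * I)) with (E * cos h) by ring.
    assert (hEc : E * cos h <> 0) by (apply Rmult_integral_contrapositive; split; lra).
    pose proof (pow2_gt_0 _ hEc). lra.
  - pose proof (pow2_gt_0 _ hs). pose proof (pow2_ge_0 (E * (cos h + sin h * I))). lra.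
Qed.

Section Rear_track_family.

Variables (l T : R) (Fx Fy Rx Ry : R -> R).
Hypotheses (hl : 0 < l) (hF : closed_arclength_front Fx Fy T)
  (hR : rear_track l Fx Fy Rx Ry T).

Definition sin_steer (t : R) : R :=
  (Derive Fy t * (Fx t - Rx t) - Derive Fx t * (Fy t - Ry t)) / l.

Lemma rear_track_velocity (t : R) : 0 <= t <= T ->
  Derive Rx t = Derive Fx t + sin_steer t * (Fy t - Ry t) / l /\
  Derive Ry t = Derive Fy t - sin_steer t * (Fx t - Rx t) / l.
Proof.
  intro ht. destruct hF as [hT [hx [hy _]]].
  destruct (hR t ht) as [hRx [hRy [hlen hpar]]].
  pose proof (hx 1%nat t) as hFx. pose proof (hy 1%nat t) as hFy.
  (* Differentiating the constant length [|F - R|^2 = l^2] gives the radial component of [R']. *)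
  assert (hrad : 2 * (Fx t - Rx t) * (Derive Fx t - Derive Rx t)
                 + 2 * (Fy t - Ry t) * (Derive Fy t - Derive Ry t) = 0).
  { apply (is_derive_vanishing_on_interval
             (fun u => (Fx u - Rx u) ^ 2 + (Fy u - Ry u) ^ 2 - l ^ 2) 0 T t); [lra|exact ht| |].
    - auto_derive; [repeat split; assumption|]. fold_eta_Derive. ring.
    - intros s hs. destruct (hR s hs) as [_ [_ [h _]]]. rewrite h. ring. }
  unfold sin_steer.
  set (Dx := Fx t - Rx t) in *. set (Dy := Fy t - Ry t) in *.
  set (a := Derive Fx t) in *. set (b := Derive Fy t) in *.
  set (c := Derive Rx t) in *. set (d := Derive Ry t) in *.
  assert (hl2 : l ^ 2 <> 0) by (apply pow_nonzero; lra).
  assert (hdot : Dx * c + Dy * d = Dx * a + Dy * b) by lra.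
  split; apply Rmult_eq_reg_r with (l ^ 2); try exact hl2.
  - transitivity (a * (Dx ^ 2 + Dy ^ 2) + (b * Dx - a * Dy) * Dy); [|rewrite hlen; field; lra].
    rewrite <- hlen.
    transitivity (Dx * (Dx * c + Dy * d) + Dy * (c * Dy - d * Dx)); [ring|].
    rewrite hdot, hpar. ring.
  - transitivity (b * (Dx ^ 2 + Dy ^ 2) - (b * Dx - a * Dy) * Dx); [|rewrite hlen; field; lra].
    rewrite <- hlen.
    transitivity (Dy * (Dx * c + Dy * d) - Dx * (c * Dy - d * Dx)); [ring|].
    rewrite hdot, hpar. ring.
Qed.

Lemma ex_derive_steer (t : R) : 0 <= t <= T ->
  ex_derive (cos_steer l Fx Fy Rx Ry) t /\ ex_derive sin_steer t.
Proof.
  intro ht. destruct hF as [_ [hx [hy _]]]. destruct (hR t ht) as [hRx [hRy _]].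
  pose proof (hx 1%nat t). pose proof (hy 1%nat t).
  pose proof (hx 2%nat t). pose proof (hy 2%nat t).
  unfold cos_steer, sin_steer. split; auto_derive; repeat split; assumption.
Qed.

Definition cos_rate (t : R) : R := cos_steer l Fx Fy Rx Ry (clamp 0 T t) / l.
Definition sin_rate (t : R) : R := sin_steer (clamp 0 T t) / l.

Lemma continuous_rates (t : R) : continuous cos_rate t /\ continuous sin_rate t.
Proof.
  destruct hF as [hT _].
  split; [apply (continuous_clamp_comp (fun s => cos_steer l Fx Fy Rx Ry s / l))
         |apply (continuous_clamp_comp (fun s => sin_steer s / l))]; try lra;
    intros s hs; apply (ex_derive_continuous (V := R_NormedModule));
    destruct (ex_derive_steer s hs); auto_derive; assumption.
Qed.

Definition dilation (t : R) : R := exp (RInt cos_rate 0 t).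
Definition shear (t : R) : R := RInt (fun s => sin_rate s / dilation s) 0 t.

Lemma is_derive_dilation (t : R) : is_derive dilation t (cos_rate t * dilation t).
Proof.
  assert (hc : forall x, continuous cos_rate x) by (intro x; exact (proj1 (continuous_rates x))).
  pose proof (is_derive_RInt_continuous cos_rate 0 t hc) as hI.
  exact (is_derive_comp exp (fun u => RInt cos_rate 0 u) t _ _ (is_derive_exp _) hI).
Qed.

Lemma is_derive_shear (t : R) : is_derive shear t (sin_rate t / dilation t).
Proof.
  apply (is_derive_RInt_continuous (fun s => sin_rate s / dilation s)). intro x.
  apply (continuous_ext (fun y => mult (sin_rate y) (/ dilation y))); [reflexivity|].
  apply (continuous_mult (U := R_UniformSpace) (K := R_AbsRing));
    [exact (proj2 (continuous_rates x))|].
  apply (ex_derive_continuous (V := R_NormedModule)).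
  pose proof (is_derive_dilation x). pose proof (exp_pos (RInt cos_rate 0 x)).
  auto_derive. split; [eexists; eassumption|split; [unfold dilation in *; lra|exact I]].
Qed.

Definition lin_x (h t : R) : R := dilation t * (cos h + sin h * shear t).

Lemma lin_x_0 (h : R) : lin_x h 0 = cos h.
Proof.
  unfold lin_x, dilation, shear. rewrite !RInt_point. unfold zero; simpl. rewrite exp_0. ring.
Qed.

Lemma lin_x_norm_pos (h t : R) : 0 < lin_x h t ^ 2 + sin h ^ 2.
Proof. apply sum_sq_pos_of_cos_sin, exp_pos. Qed.

Lemma is_derive_lin_x (h t : R) :
  is_derive (lin_x h) t (cos_rate t * lin_x h t + sin_rate t * sin h).
Proof.
  pose proof (is_derive_dilation t) as hE. pose proof (is_derive_shear t) as hI.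
  pose proof (exp_pos (RInt cos_rate 0 t)) as hE_pos.
  unfold lin_x. auto_derive; [repeat split; eexists; eassumption|].
  fold_eta_Derive. rewrite (is_derive_unique _ _ _ hE), (is_derive_unique _ _ _ hI).
  unfold dilation in *. field. lra.
Qed.

Definition turned_x (h t : R) : R :=
  Fx t - l * rot_sq_x (lin_x h t) (sin h) ((Fx t - Rx t) / l) ((Fy t - Ry t) / l).
Definition turned_y (h t : R) : R :=
  Fy t - l * rot_sq_y (lin_x h t) (sin h) ((Fx t - Rx t) / l) ((Fy t - Ry t) / l).

Lemma rear_track_turned (h : R) : rear_track l Fx Fy (turned_x h) (turned_y h) T.
Proof.
  intros t ht. pose proof hF as [_ [hx [hy _]]].
  destruct (hR t ht) as [hRx [hRy [hlen _]]].
  pose proof (hx 1%nat t) as hFx. pose proof (hy 1%nat t) as hFy.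
  destruct (rear_track_velocity t ht) as [dRx dRy].
  pose proof (is_derive_lin_x h t) as hX. unfold cos_rate, sin_rate in hX.
  rewrite clamp_id in hX by exact ht.
  pose proof (lin_x_norm_pos h t) as hN.
  set (X := lin_x h t) in *. set (Y := sin h) in *.
  set (ux := rot_sq_x X Y ((Fx t - Rx t) / l) ((Fy t - Ry t) / l)).
  set (uy := rot_sq_y X Y ((Fx t - Rx t) / l) ((Fy t - Ry t) / l)).
  set (c := cos_steer l Fx Fy Rx Ry t) in *. set (s := sin_steer t) in *.
  (* Angular velocity of the turned direction: that of [F - R], plus twice that of [X + i Y]. *)
  set (w := s / l - 2 * Y * (c * X + s * Y) / (l * (X ^ 2 + Y ^ 2))).
  assert (hXd : ex_derive (lin_x h) t) by (eexists; exact hX).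
  assert (hdx : is_derive (turned_x h) t (Derive Fx t + l * uy * w)).
  { unfold turned_x, rot_sq_x. auto_derive; [repeat split; try assumption; fold X Y; lra|].
    fold_eta_Derive. rewrite dRx, dRy, (is_derive_unique _ _ _ hX). fold X Y.
    unfold w, uy, rot_sq_y. field. split; lra. }
  assert (hdy : is_derive (turned_y h) t (Derive Fy t - l * ux * w)).
  { unfold turned_y, rot_sq_y. auto_derive; [repeat split; try assumption; fold X Y; lra|].
    fold_eta_Derive. rewrite dRx, dRy, (is_derive_unique _ _ _ hX). fold X Y.
    unfold w, ux, rot_sq_x. field. split; lra. }
  assert (hw : l * w = Derive Fy t * ux - Derive Fx t * uy).
  { unfold w, ux, uy, rot_sq_x, rot_sq_y, s, c, sin_steer, cos_steer. field. split; lra. }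
  assert (hu : ux ^ 2 + uy ^ 2 = 1).
  { unfold ux, uy. rewrite rot_sq_norm by lra.
    replace (((Fx t - Rx t) / l) ^ 2 + ((Fy t - Ry t) / l) ^ 2)
      with (((Fx t - Rx t) ^ 2 + (Fy t - Ry t) ^ 2) / l ^ 2) by (field; lra).
    rewrite hlen. field. lra. }
  split; [eexists; exact hdx|]. split; [eexists; exact hdy|].
  rewrite (is_derive_unique _ _ _ hdx), (is_derive_unique _ _ _ hdy).
  unfold turned_x, turned_y. fold X Y ux uy. split.
  - transitivity (l ^ 2 * (ux ^ 2 + uy ^ 2)); [ring|]. rewrite hu. ring.
  - transitivity (l * (Derive Fx t * uy - Derive Fy t * ux + l * w * (ux ^ 2 + uy ^ 2))); [ring|].
    rewrite hu, Rmult_1_r, hw. ring.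
Qed.

Lemma rel_angle_turned_start (a0 h : R) : rel_angle l Fx Fy Rx Ry 0 a0 ->
  rel_angle l Fx Fy (turned_x h) (turned_y h) 0 (a0 + 2 * h).
Proof.
  intros [hx hy]. destruct (rot_sq_cos_sin a0 h) as [hc hs].
  unfold rel_angle, turned_x, turned_y. rewrite lin_x_0, hx, hy, <- hc, <- hs.
  replace (l * cos a0 / l) with (cos a0) by (field; lra).
  replace (l * sin a0 / l) with (sin a0) by (field; lra).
  split; ring.
Qed.

Lemma turned_end (a0 h : R) :
  Rx T = Rx 0 -> Ry T = Ry 0 -> rel_angle l Fx Fy Rx Ry 0 a0 ->
  Fx T - turned_x h T = l * rot_sq_x (lin_x h T) (sin h) (cos a0) (sin a0) /\
  Fy T - turned_y h T = l * rot_sq_y (lin_x h T) (sin h) (cos a0) (sin a0).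
Proof.
  intros hxT hyT [hx hy]. destruct hF as [_ [_ [_ [hper _]]]].
  destruct (hper 0) as [hFx hFy]. rewrite Rplus_0_l in hFx, hFy.
  unfold turned_x, turned_y. rewrite hxT, hyT, hFx, hFy, hx, hy.
  replace (l * cos a0 / l) with (cos a0) by (field; lra).
  replace (l * sin a0 / l) with (sin a0) by (field; lra).
  split; ring.
Qed.

Lemma monodromy_rot_sq (M : R -> R) (a0 x : R) :
  Rx T = Rx 0 -> Ry T = Ry 0 -> rel_angle l Fx Fy Rx Ry 0 a0 -> is_monodromy l Fx Fy T M ->
  cos (M x) = rot_sq_x (lin_x ((x - a0) / 2) T) (sin ((x - a0) / 2)) (cos a0) (sin a0) /\
  sin (M x) = rot_sq_y (lin_x ((x - a0) / 2) T) (sin ((x - a0) / 2)) (cos a0) (sin a0).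
Proof.
  intros hxT hyT ha0 [_ hM]. set (h := (x - a0) / 2).
  pose proof (rel_angle_turned_start a0 h ha0) as hstart.
  replace (a0 + 2 * h) with x in hstart by (unfold h; field).
  destruct (hM _ _ x (rear_track_turned h) hstart) as [hcx hsx].
  destruct (turned_end a0 h hxT hyT ha0) as [hex hey].
  split; apply Rmult_eq_reg_l with l; lra.
Qed.

Lemma dilation_end : dilation T = exp (signed_length l Fx Fy Rx Ry T / l).
Proof.
  destruct hF as [hT _]. unfold dilation, signed_length. f_equal.
  rewrite (RInt_ext _ (fun t => scal (/ l) (cos_steer l Fx Fy Rx Ry t))).
  - rewrite (RInt_scal (V := R_CompleteNormedModule)).
    unfold scal; simpl. unfold mult; simpl. unfold Rdiv. ring.
    apply ex_RInt_continuous. intros z hz. rewrite Rmin_left, Rmax_right in hz by lra.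
    apply (ex_derive_continuous (V := R_NormedModule)), (ex_derive_steer z hz).
  - intros z hz. rewrite Rmin_left, Rmax_right in hz by lra.
    unfold cos_rate. rewrite clamp_id by lra. unfold scal; simpl. unfold mult; simpl.
    unfold Rdiv. ring.
Qed.

End Rear_track_family.

Section Moebius_angle_map.

Variables (e K a0 : R).
Hypothesis he : 0 < e.

Definition mob_x (x : R) : R := e * (cos ((x - a0) / 2) + sin ((x - a0) / 2) * K).
Definition mob_norm (x : R) : R := mob_x x ^ 2 + sin ((x - a0) / 2) ^ 2.

Lemma mob_norm_pos (x : R) : 0 < mob_norm x.
Proof. apply sum_sq_pos_of_cos_sin, he. Qed.

Lemma mob_norm_base : mob_norm a0 = e ^ 2.
Proof.
  unfold mob_norm, mob_x. replace ((a0 - a0) / 2) with 0 by field.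
  rewrite sin_0, cos_0. ring.
Qed.

Variable M : R -> R.
Hypotheses (hMc : forall x, continuous M x)
  (hcos : forall x, cos (M x) = rot_sq_x (mob_x x) (sin ((x - a0) / 2)) (cos a0) (sin a0))
  (hsin : forall x, sin (M x) = rot_sq_y (mob_x x) (sin ((x - a0) / 2)) (cos a0) (sin a0)).

Lemma is_derive_moebius_angle (x : R) : is_derive M x (e / mob_norm x).
Proof.
  pose proof (mob_norm_pos x) as hN.
  assert (hX : is_derive mob_x x (e * (cos ((x - a0) / 2) * K - sin ((x - a0) / 2)) / 2)).
  { unfold mob_x. auto_derive; [exact I|].
    change ((x + - a0) * / 2) with ((x - a0) / 2). field. }
  assert (hY : is_derive (fun x => sin ((x - a0) / 2)) x (cos ((x - a0) / 2) / 2)).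
  { auto_derive; [exact I|]. change ((x + - a0) * / 2) with ((x - a0) / 2). field. }
  assert (hpq : cos a0 ^ 2 + sin a0 ^ 2 = 1)
    by (pose proof (sin2_cos2 a0); unfold Rsqr in *; lra).
  pose proof (is_derive_angle_rot_sq M mob_x (fun x => sin ((x - a0) / 2)) (cos a0) (sin a0) x
    _ _ hpq (hMc x) ltac:(unfold mob_norm in hN; lra) hcos hsin hX hY) as hd.
  assert (hnum : 2 * (mob_x x * (cos ((x - a0) / 2) / 2) - sin ((x - a0) / 2) *
      (e * (cos ((x - a0) / 2) * K - sin ((x - a0) / 2)) / 2)) = e).
  { pose proof (sin2_cos2 ((x - a0) / 2)) as h1. unfold Rsqr in h1.
    rewrite <- (Rmult_1_r e) at 2. rewrite <- h1. unfold mob_x. field. }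
  rewrite <- hnum at 1. exact hd.
Qed.

Lemma mob_norm_at_fixed (b : R) : circle_fixed M b ->
  (forall k : Z, b <> a0 + 2 * IZR k * PI) -> mob_norm b = 1.
Proof.
  intros hfix hb. apply circle_fixed_cos_sin in hfix as [hc hs].
  set (h := (b - a0) / 2) in *.
  assert (hsh : sin h <> 0).
  { intro h0. destruct (sin_eq_0_0 _ h0) as [k hk]. apply (hb k). unfold h in hk. lra. }
  destruct (rot_sq_cos_sin a0 h) as [hc' hs'].
  replace (a0 + 2 * h) with b in hc', hs' by (unfold h; field).
  rewrite hcos in hc. rewrite hsin in hs. fold h in hc, hs.
  apply (rot_sq_eq_norm _ (cos h) (sin h) (cos a0) (sin a0)).
  - pose proof (sin2_cos2 h). unfold Rsqr in *. lra.
  - exact hsh.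
  - pose proof (sin2_cos2 a0). unfold Rsqr in *. lra.
  - rewrite hc, hc'. reflexivity.
  - rewrite hs, hs'. reflexivity.
Qed.

Lemma fixed_of_mob_x_cos (h : R) : mob_x (a0 + 2 * h) = cos h ->
  circle_fixed M (a0 + 2 * h) /\ mob_norm (a0 + 2 * h) = 1.
Proof.
  intro hX. assert (hh : (a0 + 2 * h - a0) / 2 = h) by field.
  destruct (rot_sq_cos_sin a0 h) as [hc hs].
  split.
  - apply circle_fixed_cos_sin. rewrite hcos, hsin, hX, hh. split; assumption.
  - unfold mob_norm. rewrite hX, hh. pose proof (sin2_cos2 h). unfold Rsqr in *. lra.
Qed.

(* The solutions [h] of [mob_x (a0 + 2 h) = cos h] are those of [(e - 1) cos h + e K sin h = 0]. *)
Lemma exists_fixed_mob_norm1 : exists b, circle_fixed M b /\ mob_norm b = 1.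
Proof.
  destruct (Req_dec e 1) as [he1|he1].
  - exists (a0 + 2 * 0). apply fixed_of_mob_x_cos.
    unfold mob_x. replace ((a0 + 2 * 0 - a0) / 2) with 0 by field.
    rewrite sin_0, cos_0, he1. ring.
  - set (u := e * K / (e - 1)). set (h := PI / 2 + atan u).
    exists (a0 + 2 * h). apply fixed_of_mob_x_cos.
    assert (hca : 0 < cos (atan u)) by (pose proof (atan_bound u); apply cos_gt_0; lra).
    assert (hsa : sin (atan u) = u * cos (atan u)).
    { rewrite <- (tan_atan u) at 2. unfold tan. field. lra. }
    assert (hch : cos h = - sin (atan u)) by (unfold h; rewrite cos_plus, cos_PI2, sin_PI2; ring).
    assert (hsh : sin h = cos (atan u)) by (unfold h; rewrite sin_plus, cos_PI2, sin_PI2; ring).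
    unfold mob_x. replace ((a0 + 2 * h - a0) / 2) with h by field.
    rewrite hch, hsh, hsa. unfold u. field. intro; apply he1; lra.
Qed.

End Moebius_angle_map.

Theorem theorem3 (l T : R) (Fx Fy Rx Ry M : R -> R) (a0 : R) :
  0 < l ->
  closed_arclength_front Fx Fy T ->
  rear_track l Fx Fy Rx Ry T ->
  Rx T = Rx 0 -> Ry T = Ry 0 ->
  rel_angle l Fx Fy Rx Ry 0 a0 ->
  is_monodromy l Fx Fy T M ->
  let L := signed_length l Fx Fy Rx Ry T in
  is_derive M a0 (exp (- L / l)) /\
  (exists b, circle_fixed M b /\ is_derive M b (exp (L / l))) /\
  (forall b, circle_fixed M b ->
     (forall k : Z, b <> a0 + 2 * IZR k * PI) ->
     is_derive M b (exp (L / l))).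
Proof.
  intros hl hF hR hxT hyT ha0 hMon L.
  pose proof (dilation_end l T Fx Fy Rx Ry hF hR) as hE. fold L in hE.
  set (e := dilation l T Fx Fy Rx Ry T) in hE. set (K := shear l T Fx Fy Rx Ry T).
  assert (he : 0 < e) by (rewrite hE; apply exp_pos).
  pose proof (fun x => monodromy_rot_sq l T Fx Fy Rx Ry hl hF hR M a0 x hxT hyT ha0 hMon) as hrot.
  assert (hcos : forall x,
    cos (M x) = rot_sq_x (mob_x e K a0 x) (sin ((x - a0) / 2)) (cos a0) (sin a0))
    by (intro x; apply hrot).
  assert (hsin : forall x,
    sin (M x) = rot_sq_y (mob_x e K a0 x) (sin ((x - a0) / 2)) (cos a0) (sin a0))
    by (intro x; apply hrot).
  pose proof (is_derive_moebius_angle e K a0 he M (proj1 hMon) hcos hsin) as hd.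
  split; [|split].
  - replace (exp (- L / l)) with (e / mob_norm e K a0 a0); [apply hd|].
    rewrite mob_norm_base, hE, Rdiv_opp_l, exp_Ropp. field. apply Rgt_not_eq, exp_pos.
  - destruct (exists_fixed_mob_norm1 e K a0 M hcos hsin) as [b [hb hn]].
    exists b. split; [exact hb|]. rewrite <- hE, <- (Rdiv_1_r e), <- hn. apply hd.
  - intros b hb hk.
    rewrite <- hE, <- (Rdiv_1_r e), <- (mob_norm_at_fixed e K a0 M hcos hsin b hb hk).
    apply hd.
Qed.
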